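(* Let $(R,\mathfrak{m})$ be a Noetherian local ring, $M$ a finitely generated $R$-module and $L$ a submodule of $M$. Let $N$ be an integer with $N>\mathrm{AR}(\mathfrak{m},L\subseteq M)$. If $K$ is a submodule of $M$ such that $L\equiv K \bmod \mathfrak{m}^NM$ (i.e. $L+\mathfrak{m}^NM=K+\mathfrak{m}^NM$), then $L^*\subseteq K^*$.
   Context: The Artin–Rees number $\mathrm{AR}(\mathfrak{m},L\subseteq M)$ is the least integer $s$ such that $\mathfrak{m}^nM\cap L=\mathfrak{m}^{n-s}(\mathfrak{m}^sM\cap L)$ for all $n\ge s$. For a submodule $L\subseteq M$, the initial module $L^*$ is the graded $\mathrm{gr}_{\mathfrak{m}}(R)$-submodule of $\mathrm{gr}_{\mathfrak{m}}(M)=\bigoplus_{i\ge0}\mathfrak{m}^iM/\mathfrak{m}^{i+1}M$ given by the kernel of the natural map $\mathrm{gr}_{\mathfrak{m}}(M)\to\mathrm{gr}_{\mathfrak{m}}(M/L)$; equivalently $L^*=\bigoplus_{i\ge0}(L\cap\mathfrak{m}^iM+\mathfrak{m}^{i+1}M)/\mathfrak{m}^{i+1}M$. *)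

From mathcomp Require Import all_boot all_algebra.
Set Implicit Arguments. Unset Strict Implicit. Unset Printing Implicit Defensive.
Import GRing.Theory.
Local Open Scope ring_scope.

Section CommAlg.
Variable R : comUnitRingType.

Definition is_ideal (I : R -> Prop) : Prop :=
  [/\ I 0, (forall x y, I x -> I y -> I (x + y)) & (forall r x, I x -> I (r * x))].

Definition noetherian_ring : Prop :=
  forall I : R -> Prop, is_ideal I ->
    exists n (g : 'I_n -> R), forall x,
      I x <-> exists c : 'I_n -> R, x = \sum_(i < n) c i * g i.

(* (R, m) is local with maximal ideal m: m is a proper ideal and every
   element outside m is a unit (so m is the unique maximal ideal). *)
Definition local_ring_with_max (m : R -> Prop) : Prop :=
  [/\ is_ideal m, ~ m 1 & forall x, ~ m x -> x \is a GRing.unit].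

Variable M : lmodType R.

Definition is_submod (L : M -> Prop) : Prop :=
  [/\ L 0, (forall x y, L x -> L y -> L (x + y)) & (forall r x, L x -> L (r *: x))].

Definition fin_gen_module : Prop :=
  exists n (g : 'I_n -> M), forall x : M,
    exists c : 'I_n -> R, x = \sum_(i < n) c i *: g i.

Definition ideal_mul (I : R -> Prop) (P : M -> Prop) : M -> Prop :=
  fun x => exists n (a : 'I_n -> R) (y : 'I_n -> M),
    [/\ forall i, I (a i), forall i, P (y i) & x = \sum_(i < n) a i *: y i].

Fixpoint ideal_pow_mul (I : R -> Prop) (k : nat) (P : M -> Prop) : M -> Prop :=
  match k with
  | 0 => P
  | k'.+1 => ideal_mul I (ideal_pow_mul I k' P)
  end.

Definition mpowM (m : R -> Prop) (i : nat) : M -> Prop :=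
  ideal_pow_mul m i (fun _ => True).

Definition sum_sub (P Q : M -> Prop) : M -> Prop :=
  fun x => exists p q, [/\ P p, Q q & x = p + q].

Definition inter_sub (P Q : M -> Prop) : M -> Prop := fun x => P x /\ Q x.

Definition AR_prop (m : R -> Prop) (L : M -> Prop) (s : nat) : Prop :=
  forall n, (s <= n)%N -> forall x,
    inter_sub (mpowM m n) L x <->
    ideal_pow_mul m (n - s) (inter_sub (mpowM m s) L) x.

Definition is_AR_number (m : R -> Prop) (L : M -> Prop) (s : nat) : Prop :=
  AR_prop m L s /\ forall t, AR_prop m L t -> (s <= t)%N.

(* Degree-i component of the initial module L^*, represented by its preimage
   (L ∩ m^i M + m^(i+1) M) in m^i M; the actual component is this set
   modulo m^(i+1) M. *)
Definition initial_comp (m : R -> Prop) (L : M -> Prop) (i : nat) : M -> Prop :=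
  sum_sub (inter_sub L (mpowM m i)) (mpowM m i.+1).

(* L^* ⊆ K^* as graded submodules of gr_m(M): componentwise inclusion. *)
Definition initial_subset (m : R -> Prop) (L K : M -> Prop) : Prop :=
  forall i x, initial_comp m L i x -> initial_comp m K i x.

End CommAlg.

From mathcomp Require Import all_boot all_algebra zify.
Local Open Scope ring_scope.
Import GRing.Theory.
Set Implicit Arguments. Unset Strict Implicit.

(* Write an element of L ∩ m^i M as k + z with k in K and z in
   m^N M.  If i < N, then z already lies in m^(i+1) M and k in m^i M.  If
   i >= N > s, Artin-Rees gives L ∩ m^i M = m^(i-s) (m^s M ∩ L); splitting
   each generator of m^s M ∩ L in the same way puts the K-part in m^i M and
   the rest in m^(i-s+N) M ⊆ m^(i+1) M.  Besides K being a submodule, only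
   the facts that m is an ideal and that s satisfies the Artin-Rees condition
   are used; the Noetherian, local and finiteness hypotheses serve only to
   make AR(m, L ⊆ M) exist. *)

Local Notation "P ⊆ Q" := (forall x, P x -> Q x) (at level 70, no associativity).

Section IdealMul.
Variables (R : comUnitRingType) (M : lmodType R).
Implicit Types (I : R -> Prop) (P Q A B : M -> Prop).

Lemma ideal_mul_mono I P Q : P ⊆ Q -> ideal_mul I P ⊆ ideal_mul I Q.
Proof. by move=> PQ x [n [a [y [Ia Py ->]]]]; exists n, a, y; split => // i; apply: PQ. Qed.

Lemma ideal_pow_mul_mono I k P Q :
  P ⊆ Q -> ideal_pow_mul I k P ⊆ ideal_pow_mul I k Q.
Proof. by elim: k => [|k IHk] //= PQ; apply/ideal_mul_mono/IHk. Qed.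

Lemma ideal_pow_mulD I j k P x :
  ideal_pow_mul I j (ideal_pow_mul I k P) x <-> ideal_pow_mul I (j + k) P x.
Proof.
elim: j x => [|j IHj] x //=.
by split; apply: ideal_mul_mono => y /IHj.
Qed.

Lemma ideal_mul_scale I P a p : I a -> P p -> ideal_mul I P (a *: p).
Proof. by move=> Ia Pp; exists 1%N, (fun=> a), (fun=> p); rewrite big_ord1. Qed.

Lemma inter_subl P Q : inter_sub P Q ⊆ P.
Proof. by move=> x []. Qed.

Lemma inter_subr P Q : inter_sub P Q ⊆ Q.
Proof. by move=> x []. Qed.

Lemma sum_sub_mono P Q A B : P ⊆ A -> Q ⊆ B -> sum_sub P Q ⊆ sum_sub A B.
Proof. by move=> PA QB x [p [q [Pp Qq ->]]]; exists p, q; split; auto. Qed.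

Lemma sum_subl P Q : Q 0 -> P ⊆ sum_sub P Q.
Proof. by move=> Q0 x Px; exists x, 0; rewrite addr0. Qed.

Lemma submodB P x y : is_submod P -> P x -> P y -> P (x - y).
Proof. by move=> [_ PD PZ] Px Py; rewrite -scaleN1r; apply/PD/PZ. Qed.

Lemma submod_sum P n (F : 'I_n -> M) :
  is_submod P -> (forall i, P (F i)) -> P (\sum_(i < n) F i).
Proof. by move=> [P0 PD _] PF; apply: big_ind. Qed.

Section Ideal.
Variable I : R -> Prop.
Hypothesis idealI : is_ideal I.

Lemma ideal_mul_submod P : is_submod (ideal_mul I P).
Proof.
have [_ _ IM] := idealI; split.
- by exists 0%N, (fun=> 0), (fun=> 0); rewrite big_ord0; split => // -[].
- move=> _ _ [n1 [a1 [y1 [Ia1 Py1 ->]]]] [n2 [a2 [y2 [Ia2 Py2 ->]]]].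
  exists (n1 + n2)%N,
    (fun i => match split i with inl j => a1 j | inr j => a2 j end),
    (fun i => match split i with inl j => y1 j | inr j => y2 j end).
  split; try by move=> i; case: (split i).
  by rewrite big_split_ord; congr (_ + _); apply: eq_bigr => j _;
    [rewrite (unsplitK (inl _)) | rewrite (unsplitK (inr _))].
- move=> r _ [n [a [y [Ia Py ->]]]].
  exists n, (fun i => r * a i), y; split => //; first by move=> i; apply: IM.
  by rewrite scaler_sumr; apply: eq_bigr => i _; rewrite scalerA.
Qed.

Lemma ideal_pow_mul_submod k P : is_submod P -> is_submod (ideal_pow_mul I k P).
Proof. by case: k => [|k] //= _; apply: ideal_mul_submod. Qed.

Lemma ideal_mul_sub P : is_submod P -> ideal_mul I P ⊆ P.
Proof.
move=> subP _ [n [a [y [Ia Py ->]]]]; apply: submod_sum => // i.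
by case: subP => _ _; apply.
Qed.

Lemma ideal_pow_mul_sub k P : is_submod P -> ideal_pow_mul I k P ⊆ P.
Proof.
move=> subP; elim: k => [|k IHk] //= x /ideal_mul_sub Px.
by apply/IHk/Px/ideal_pow_mul_submod.
Qed.

Lemma mpowM_submod k : is_submod (mpowM (M:=M) I k).
Proof. exact: ideal_pow_mul_submod. Qed.

Lemma mpowM_le j k : (k <= j)%N -> mpowM (M:=M) I j ⊆ mpowM I k.
Proof.
move=> /subnK <- x /ideal_pow_mulD.
by apply: ideal_pow_mul_sub; apply: mpowM_submod.
Qed.

Lemma ideal_pow_mul_sum_sub k P A B : P ⊆ sum_sub A B ->
  ideal_pow_mul I k P ⊆ sum_sub (ideal_pow_mul I k A) (ideal_pow_mul I k B).
Proof.
elim: k => [|k IHk] //= PAB _ [n [a [y [Ia Py ->]]]].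
have [A0 AD _] := ideal_mul_submod (ideal_pow_mul I k A).
have [B0 BD _] := ideal_mul_submod (ideal_pow_mul I k B).
apply: (big_ind (sum_sub _ _)).
- by exists 0, 0; rewrite addr0.
- move=> _ _ [p1 [q1 [Ap1 Bq1 ->]]] [p2 [q2 [Ap2 Bq2 ->]]].
  by exists (p1 + p2), (q1 + q2); rewrite addrACA; split; auto.
- move=> i _; have [p [q [Ap Bq ->]]] := IHk PAB _ (Py i).
  by exists (a i *: p), (a i *: q); rewrite scalerDr; split => //; apply: ideal_mul_scale.
Qed.

End Ideal.
End IdealMul.

Section InitialModule.
Variables (R : comUnitRingType) (M : lmodType R) (m : R -> Prop) (L K : M -> Prop).
Hypothesis ideal_m : is_ideal m.

Lemma initial_comp_subset i :
  inter_sub L (mpowM m i) ⊆ initial_comp m K i ->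
  initial_comp m L i ⊆ initial_comp m K i.
Proof.
move=> LK _ [l [y [Ll My ->]]]; have [k [z [Kk Mz ->]]] := LK l Ll.
have [_ MD _] := mpowM_submod M ideal_m i.+1.
by exists k, (z + y); rewrite addrA; split => //; apply: MD.
Qed.

Variable N : nat.
Hypothesis LsubK : L ⊆ sum_sub K (mpowM m N).

Lemma inter_mpowM_sum_sub j : (j <= N)%N ->
  inter_sub L (mpowM m j) ⊆ sum_sub (inter_sub K (mpowM m j)) (mpowM m N).
Proof.
move=> jN l [Ll Ml]; have [k [z [Kk Mz def_l]]] := LsubK Ll.
exists k, z; split => //; split => //.
rewrite (_ : k = l - z); last by rewrite def_l addrK.
by apply: submodB (mpowM_submod M ideal_m j) Ml (mpowM_le ideal_m jN Mz).
Qed.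

Lemma initial_comp_lt i : (i < N)%N -> inter_sub L (mpowM m i) ⊆ initial_comp m K i.
Proof.
move=> iN x /(inter_mpowM_sum_sub (ltnW iN)).
by apply: sum_sub_mono => //; apply: mpowM_le.
Qed.

Lemma initial_comp_AR s i : AR_prop m L s -> is_submod K -> (s < N <= i)%N ->
  inter_sub L (mpowM m i) ⊆ initial_comp m K i.
Proof.
move=> ARs subK /andP[sN Ni] l [Ll Ml].
have si : (s <= i)%N by apply: leq_trans (ltnW sN) Ni.
have split_gens : inter_sub (mpowM m s) L ⊆
    sum_sub (inter_sub K (mpowM m s)) (mpowM m N).
  move=> x [Mx Lx]; exact: (inter_mpowM_sum_sub (ltnW sN) (conj Lx Mx)).
have := ideal_pow_mul_sum_sub ideal_m split_gens ((ARs i si l).1 (conj Ml Ll)).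
apply: sum_sub_mono => x Hx.
- have KHx := ideal_pow_mul_mono (@inter_subl _ _ _ _) Hx.
  have MHx := ideal_pow_mul_mono (@inter_subr _ _ _ _) Hx.
  split; first exact: (ideal_pow_mul_sub ideal_m subK KHx).
  by rewrite -(subnK si); apply/ideal_pow_mulD/MHx.
- move/ideal_pow_mulD: Hx; apply: mpowM_le => //; lia.
Qed.

End InitialModule.

Theorem proposition3p1 (R : comUnitRingType) (m : R -> Prop)
  (M : lmodType R) (L K : M -> Prop) (N : nat) :
  noetherian_ring R ->
  local_ring_with_max m ->
  fin_gen_module M ->
  is_submod L ->
  (exists s, is_AR_number m L s /\ (s < N)%N) ->
  is_submod K ->
  (forall x, sum_sub L (mpowM m N) x <-> sum_sub K (mpowM m N) x) ->
  initial_subset m L K.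
Proof.
move=> _ [ideal_m _ _] _ _ [s [[ARs _] sN]] subK LK i.
have LsubK : L ⊆ sum_sub K (mpowM m N).
  move=> x Lx; apply/(LK x).1; apply: sum_subl Lx.
  by case: (mpowM_submod M ideal_m N).
apply: initial_comp_subset => //.
have [iN | Ni] := ltnP i N; first exact: (initial_comp_lt ideal_m LsubK iN).
by apply: (initial_comp_AR ideal_m LsubK ARs subK); rewrite sN.
Qed.
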